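(* Let $(\mathbf{P},d_{\mathbf{P}})$ be a finite metric poset. (1) For nonnegative bounded complexes $E_\bullet,F_\bullet$ of projective $\mathbf{P}$-modules (with fixed decompositions of their terms into indecomposables), the following are equivalent: (a) $\mathrm{dist}'_{\mathrm{R}}(E_\bullet,F_\bullet)=0$; (b) there is a pre-matching $B$ of $(E_\bullet,F_\bullet)$ with $\mathrm{cost}(B)=0$; (c) $[E_\bullet]=[F_\bullet]$. (2) For $\mathbf{P}$-modules $M,N$ with minimal projective resolutions $P^M_\bullet,P^N_\bullet$, the following are equivalent: (a) $\mathrm{dist}'_{\mathrm{B}}(P^M_\bullet,P^N_\bullet)=0$; (b) there exist a projective resolution $E_\bullet$ of $M$ and $F_\bullet$ of $N$ with $|E_i|=|F_i|$ for all $i$ and a pre-matching $B$ of $(E_\bullet,F_\bullet)$ with $\mathrm{cost}(B)=0$; (c) $[P^M_\bullet]-[P^N_\bullet]$ lies in the subgroup of $K_{\mathrm{prj}}(\mathbf{P})^{(\mathbb{N})}$ generated by the elements $[\mathrm{Cone}(\mathrm{id}_{k[\mathbf{P}]_x})[i]]$, $x\in\mathbf{P}$, $i\in\mathbb{N}$; (d) $\hat{\alpha}([P^M_\bullet])=\hat{\alpha}([P^N_\bullet])$. In particular, if $\mathrm{dist}_{\mathrm{B}}(P^M_\bullet,P^N_\bullet)=0$, then $\hat{\alpha}([P^M_\bullet])=\hat{\alpha}([P^N_\bullet])$.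
   Context: Fix a field $k$; a $\mathbf{P}$-module is a functor from the finite poset $\mathbf{P}$ (as a category) to finite-dimensional $k$-vector spaces. For $x\in\mathbf{P}$, $k[\mathbf{P}]_x$ is the module with value $k$ at $y\ge x$, $0$ elsewhere, identity maps; these are the indecomposable projectives. $K_{\mathrm{prj}}(\mathbf{P})$ is the split Grothendieck group of projective $\mathbf{P}$-modules (free on $[k[\mathbf{P}]_x]$); for a nonnegative bounded complex $E_\bullet=(E_i)_{i\in\mathbb{N}}$ of projectives, $[E_\bullet]=([E_i])_{i\in\mathbb{N}}\in K_{\mathrm{prj}}(\mathbf{P})^{(\mathbb{N})}$ (finitely supported sequences); $\hat{\alpha}((A_i)_i)=\sum_i(-1)^iA_i$. $\mathrm{Cone}(\mathrm{id}_E)[a]$ is the complex with $E$ in degrees $a+1$ and $a$ joined by $\mathrm{id}_E$, zero elsewhere. Each term $E_i$ is a direct sum $\bigoplus_{x\in\mathrm{smd}(E_i)}k[\mathbf{P}]_x$ with a fixed decomposition ($\mathrm{smd}$ = indexed multiset of indices), $|E_i|$ its number of summands. For $y\le x$ let $\rho(x\ge y):k[\mathbf{P}]_x\to k[\mathbf{P}]_y$ be the canonical morphism (identity at each $z\ge x$), $\rho(x\ge y)=0$ otherwise; a morphism between decomposed projectives is uniquely $[a_{x,y}\rho(x\ge y)]$ with $a_{x,y}=0$ unless $x\ge y$, and $\mathrm{Mat}$ is $[a_{x,y}]$. A pre-matching of $(E_\bullet,F_\bullet)$ is a family of bijections $B_i:\mathrm{smd}(E_i)\to\mathrm{smd}(F_i)$,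 $i\ge0$; its cost is $\sup\{d_{\mathbf{P}}(x,B_i(x))\mid i,x\in\mathrm{smd}(E_i)\}$. A matching is a pre-matching such that the $(x',x)$-entry of $\mathrm{Mat}(\partial^E_i)$ equals the $(B_{i+1}(x'),B_i(x))$-entry of $\mathrm{Mat}(\partial^F_i)$ for all $i$, $x\in\mathrm{smd}(E_i)$, $x'\in\mathrm{smd}(E_{i+1})$. $\mathrm{dist}'_{\mathrm{R}}(E_\bullet,F_\bullet)$ (resp. $\mathrm{dist}_{\mathrm{R}}$) is the infimum of costs of pre-matchings (resp. matchings), $\infty$ if none. For $\mathbf{P}$-modules, with $\mathsf{Res}(P^M_\bullet,P^N_\bullet)$ the set of pairs $(E_\bullet,F_\bullet)$ of projective resolutions of $M$ and $N$ with $|E_i|=|F_i|$ for all $i$, $\mathrm{dist}'_{\mathrm{B}}(P^M_\bullet,P^N_\bullet)$ (resp. $\mathrm{dist}_{\mathrm{B}}$) is the infimum of $\mathrm{dist}'_{\mathrm{R}}$ (resp. $\mathrm{dist}_{\mathrm{R}}$) over $\mathsf{Res}(P^M_\bullet,P^N_\bullet)$, $\infty$ if empty. *)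

From HB Require Import structures.
From mathcomp Require Import all_boot all_order all_algebra.
From mathcomp Require Import boolp classical_sets reals constructive_ereal ereal.
Set Implicit Arguments.
Unset Strict Implicit.
Unset Printing Implicit Defensive.
Import Order.TTheory GRing.Theory Num.Theory.
Local Open Scope ring_scope.

Section PosetModules.
Variables (disp : Order.disp_t) (T : finPOrderType disp) (k : fieldType).

(* A (finite-dimensional) P-module: a functor from the poset T to
   finite-dimensional k-vector spaces k^(pdim x).  Linear maps act on row
   vectors: v |-> v *m pmap x y. *)
Record Pmodule := {
  pdim : T -> nat;
  pmap : forall x y : T, 'M[k]_(pdim x, pdim y);
  pmap_id : forall x, pmap x x = 1%:M;
  pmap_comp : forall x y z, (x <= y)%O -> (y <= z)%O ->
                pmap x y *m pmap y z = pmap x z;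
  pmap_junk : forall x y, ~~ (x <= y)%O -> pmap x y = 0 }.

(* A nonnegative bounded complex of projective P-modules with fixed
   decompositions:  E_i = (+)_{x in smd i} k[P]_x, differential
   d_i : E_{i+1} -> E_i given by Mat(d_i) = dif i, whose (x',x)-entry is the
   coefficient of rho(x' >= x); it vanishes unless x' >= x. *)
Record pcomplex := {
  clen : nat;
  smd : nat -> seq T;
  dif : forall i, 'M[k]_(size (smd i.+1), size (smd i));
  smd_bounded : forall i, (clen <= i)%N -> smd i = [::];
  dif_supp : forall i (j' : 'I_(size (smd i.+1))) (j : 'I_(size (smd i))),
      dif i j' j != 0 ->
      (tnth (in_tuple (smd i)) j <= tnth (in_tuple (smd i.+1)) j')%O;
  dif_sq : forall i, dif i.+1 *m dif i = 0 }.

Definition sm (E : pcomplex) i (j : 'I_(size (smd E i))) : T :=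
  tnth (in_tuple (smd E i)) j.

(* E_i evaluated at z: the coordinate subspace spanned by the summands
   k[P]_x with x <= z (row space of this diagonal 0/1 matrix). *)
Definition mask (E : pcomplex) i (z : T) : 'M[k]_(size (smd E i)) :=
  diag_mx (\row_j (if (sm j <= z)%O then 1 else 0)).

(* The augmentation E_0 -> M determined (Yoneda) by vectors v_j in M(x_j),
   evaluated at z. *)
Definition aug_at (E : pcomplex) (M : Pmodule)
    (v : forall j : 'I_(size (smd E 0)), 'rV[k]_(pdim M (sm j))) (z : T) :
    'M[k]_(size (smd E 0), pdim M z) :=
  \matrix_(j < size (smd E 0), c < pdim M z)
     (if (sm j <= z)%O then (v j *m pmap M (sm j) z) 0 c else 0).

Definition is_resolution (E : pcomplex) (M : Pmodule) : Prop :=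
  exists v : forall j : 'I_(size (smd E 0)), 'rV[k]_(pdim M (sm j)),
  forall z : T,
  [/\ row_full (mask E 0 z *m aug_at v z),
      (mask E 1 z *m dif E 0 == kermx (aug_at v z) :&: mask E 0 z)%MS &
      forall i, (mask E i.+2 z *m dif E i.+1 == kermx (dif E i) :&: mask E i.+1 z)%MS].

(* minimality: every differential lands in the radical, i.e. no component
   rho(x >= x) with nonzero coefficient *)
Definition minimal (E : pcomplex) : Prop :=
  forall i (j' : 'I_(size (smd E i.+1))) (j : 'I_(size (smd E i))),
    sm j' = sm j -> dif E i j' j = 0.

Definition is_min_resolution (E : pcomplex) (M : Pmodule) : Prop :=
  is_resolution E M /\ minimal E.

Definition prematching (E F : pcomplex) :=
  forall i, 'I_(size (smd E i)) -> 'I_(size (smd F i)).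

Definition is_prematching E F (B : prematching E F) : Prop :=
  forall i, bijective (B i).

Definition is_matching E F (B : prematching E F) : Prop :=
  is_prematching B /\
  forall i (j' : 'I_(size (smd E i.+1))) (j : 'I_(size (smd E i))),
    dif E i j' j = dif F i (B i.+1 j') (B i j).

Variable R : realType.

Definition is_metric (d : T -> T -> R) : Prop :=
  [/\ forall x y, d x y = 0 <-> x = y,
      forall x y, d x y = d y x &
      forall x y z, (d x z <= d x y + d y z)%R].

Variable d : T -> T -> R.

(* cost = sup of d(x, B_i(x)); all terms vanish for i >= clen E *)
Definition cost E F (B : prematching E F) : R :=
  \big[Num.max/0%R]_(i < clen E)
     \big[Num.max/0%R]_(j < size (smd E i)) d (sm j) (sm (B i j)).

Local Open Scope classical_set_scope.

Definition distR' (E F : pcomplex) : \bar R :=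
  ereal_inf [set (cost B)%:E | B in [set B : prematching E F | is_prematching B]].

Definition distR (E F : pcomplex) : \bar R :=
  ereal_inf [set (cost B)%:E | B in [set B : prematching E F | is_matching B]].

Definition Res (M N : Pmodule) : set (pcomplex * pcomplex) :=
  [set EF | [/\ is_resolution EF.1 M, is_resolution EF.2 N &
             forall i, size (smd EF.1 i) = size (smd EF.2 i)]].

Definition distB' (M N : Pmodule) : \bar R :=
  ereal_inf [set distR' EF.1 EF.2 | EF in Res M N].

Definition distB (M N : Pmodule) : \bar R :=
  ereal_inf [set distR EF.1 EF.2 | EF in Res M N].

End PosetModules.

Section Kgroup.
Variables (disp : Order.disp_t) (T : finPOrderType disp) (k : fieldType).

(* K_prj(P)^(N) is modelled as finitely supported maps nat -> (T -> int)
   (K_prj(P) being free on the [k[P]_x], x in T). *)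
Definition cls (E : pcomplex T k) : nat -> T -> int :=
  fun i x => (count_mem x (smd E i))%:Z.

(* [Cone(id_{k[P]_x})[a]] : k[P]_x in degrees a and a+1 *)
Definition cone_cls (x : T) (a : nat) : nat -> T -> int :=
  fun i y => ((y == x) && ((i == a) || (i == a.+1)))%:Z.

Definition alpha_hat (E : pcomplex T k) : T -> int :=
  fun x => (\sum_(i < clen E) (-1) ^+ i * cls E i x)%R.

Definition in_cone_subgroup (f : nat -> T -> int) : Prop :=
  exists l : seq (int * (T * nat)),
    f = (fun i y => \sum_(p <- l) p.1 * cone_cls p.2.1 p.2.2 i y)%R.

End Kgroup.

From Pilot Require Import Defs.
From HB Require Import structures.
From mathcomp Require Import all_boot all_order all_algebra.
From mathcomp Require Import boolp classical_sets reals constructive_ereal ereal.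
From mathcomp Require Import perm ring lra zify.
Set Implicit Arguments.
Unset Strict Implicit.
Unset Printing Implicit Defensive.
Import Order.TTheory GRing.Theory Num.Theory.
Local Open Scope ring_scope.

(* A pre-matching of cost zero can only match summands with equal indices, so
   it exists iff E and F have the same multiset of indices in every degree; and
   since a nonzero cost is at least the least nonzero distance of the finite
   metric space P, the infima dist'_R and dist'_B vanish only when attained.
   For a resolution E of M, exactness of E(z) -> M(z) -> 0 at every z in P gives,
   by counting ranks, sum_{y <= z} alpha_hat(E)(y) = dim M(z); by Moebius
   inversion on P, alpha_hat(E) is the same for every resolution of M, minimal or
   not, so (b) implies (d).  A class with vanishing alternating sum is a
   combination of cone classes, and adding a cone to a resolution gives a
   resolution: adding the negative part of the combination to P^M and the
   positive part to P^N yields resolutions with equal classes, hence (b). *)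

Lemma eqmx_kercap_rank (F : fieldType) m n p (V1 : 'M[F]_m) (A : 'M_(m, n))
    (V0 : 'M_n) (B : 'M_(n, p)) :
  (V1 *m A <= V0)%MS -> V1 *m A *m B = 0 ->
  (V1 *m A == kermx B :&: V0)%MS = (\rank (V1 *m A) + \rank (V0 *m B) == \rank V0)%N.
Proof.
move=> sub0 AB0.
have sub : (V1 *m A <= kermx B :&: V0)%MS by rewrite sub_capmx sub_kermx AB0 eqxx sub0.
rewrite -(mxrank_leqif_eq sub).2 capmxC -(mxrank_mul_ker V0 B).
by rewrite [(\rank (V0 *m B) + _)%N]addnC eqn_add2r.
Qed.

Lemma alt_sum_telescope (n r : nat -> nat) (c N : nat) :
  (r 0 + c = n 0)%N -> (forall i, r i.+1 + r i = n i.+1)%N ->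
  \sum_(i < N.+1) (-1) ^+ i * (n i)%:Z = c%:Z + (-1) ^+ N * (r N)%:Z :> int.
Proof.
move=> n0 nS; elim: N => [|N IH].
  by rewrite big_ord_recr big_ord0 /= add0r expr0 !mul1r -n0 PoszD addrC.
by rewrite big_ord_recr /= IH -nS PoszD exprS; ring.
Qed.

Lemma down_sums_eq0 disp (T : finPOrderType disp) (V : zmodType) (f : T -> V) :
  (forall z, \sum_(x | (x <= z)%O) f x = 0) -> f =1 (fun=> 0).
Proof.
move=> sum0 z; elim: {z}_.+1 {-2}z (ltnSn #|[pred y | (y < z)%O]|) => // n IH z.
rewrite ltnS => card_lt.
have lt0 x : (x < z)%O -> f x = 0.
  move=> xz; apply: IH; apply: leq_trans card_lt; apply: proper_card.
  apply/properP; split; last by exists x; rewrite !inE ?xz ?ltxx.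
  by apply/fintype.subsetP => y; rewrite !inE => yx; apply: lt_trans yx xz.
have := sum0 z; rewrite (bigD1 z) //= big1 ?addr0 // => x /andP[xz x_neq].
by apply: lt0; rewrite lt_neqAle x_neq xz.
Qed.

Section Masks.
Variables (disp : Order.disp_t) (T : finPOrderType disp) (k : fieldType).

Definition seq_mask (s : seq T) (z : T) : 'M[k]_(size s) :=
  diag_mx (\row_j (if (tnth (in_tuple s) j <= z)%O then 1 else 0)).

Definition pt_mask (x z : T) : 'M[k]_1 := (if (x <= z)%O then 1 else 0)%:M.

Lemma rank_pt_mask x z : \rank (pt_mask x z) = (x <= z)%O.
Proof.
rewrite /pt_mask; case: (x <= z)%O; first by rewrite mxrank1.
by rewrite (_ : 0%:M = 0) ?mxrank0 //; apply/matrixP => ? ?; rewrite !mxE mul0rn.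
Qed.

Lemma tnth_in_tuple_cons (x : T) s (j : 'I_(size (x :: s))) (j' : 'I_(size s)) :
  j = (1 + j')%N :> nat -> tnth (in_tuple (x :: s)) j = tnth (in_tuple s) j'.
Proof. by move=> jE; rewrite !(tnth_nth x) /= jE. Qed.

Lemma tnth_in_tuple_cons0 (x : T) s (j : 'I_(size (x :: s))) :
  j = 0%N :> nat -> tnth (in_tuple (x :: s)) j = x.
Proof. by move=> jE; rewrite (tnth_nth x) /= jE. Qed.

Lemma seq_mask_cons x s z :
  seq_mask (x :: s) z = block_mx (pt_mask x z) 0 0 (seq_mask s z) :> 'M_(1 + size s).
Proof.
apply/matrixP => i j; rewrite /seq_mask /pt_mask !mxE.
case: (splitP i) => i' iE; rewrite !mxE; case: (splitP j) => j' jE;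
  rewrite !mxE -val_eqE /= iE jE ?ord1 //.
- by rewrite (@tnth_in_tuple_cons0 x s i) // iE ord1.
- by rewrite (tnth_in_tuple_cons iE) eqn_add2l.
Qed.

Lemma rank_seq_mask s z : \rank (seq_mask s z) = count (fun x => x <= z)%O s.
Proof.
elim: s => [|x s IH]; first by rewrite flatmx0 mxrank0.
by rewrite /= -IH -rank_pt_mask -rank_diag_block_mx -seq_mask_cons.
Qed.

Lemma mask_dif_sub (E : pcomplex T k) i z :
  (Defs.mask E i.+1 z *m dif E i <= Defs.mask E i z)%MS.
Proof.
suff <- : Defs.mask E i.+1 z *m dif E i *m Defs.mask E i z = Defs.mask E i.+1 z *m dif E i.
  exact: submxMl.
rewrite /Defs.mask mul_mx_diag mul_diag_mx; apply/matrixP => a b; rewrite !mxE.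
have [->|/dif_supp ba] := eqVneq (dif E i a b) 0; first by rewrite !mulr0 mul0r.
by case: ifP => az; rewrite ?mul0r // (le_trans ba az) mulr1.
Qed.

Definition chain_rank (E : pcomplex T k) i z := \rank (Defs.mask E i z).
Definition bdry_rank (E : pcomplex T k) i z := \rank (Defs.mask E i.+1 z *m dif E i).

Lemma exact_at_rankP (E : pcomplex T k) (M : Pmodule T k)
    (v : forall j : 'I_(size (smd E 0)), 'rV[k]_(pdim M (sm j))) z :
  [/\ row_full (Defs.mask E 0 z *m aug_at v z),
      (Defs.mask E 1 z *m dif E 0 == kermx (aug_at v z) :&: Defs.mask E 0 z)%MS &
      forall i, (Defs.mask E i.+2 z *m dif E i.+1 == kermx (dif E i) :&: Defs.mask E i.+1 z)%MS]
  <->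
  [/\ \rank (Defs.mask E 0 z *m aug_at v z) = pdim M z,
      Defs.mask E 1 z *m dif E 0 *m aug_at v z = 0,
      (bdry_rank E 0 z + \rank (Defs.mask E 0 z *m aug_at v z) = chain_rank E 0 z)%N &
      forall i, (bdry_rank E i.+1 z + bdry_rank E i z = chain_rank E i.+1 z)%N].
Proof.
have mask_dif_sq i : Defs.mask E i.+2 z *m dif E i.+1 *m dif E i = 0.
  by rewrite -mulmxA dif_sq mulmx0.
split=> [[full0 exact0 exactS]|[full0 comp0 rank0 rankS]].
  have comp0 : Defs.mask E 1 z *m dif E 0 *m aug_at v z = 0.
    apply/eqP; rewrite -sub_kermx; case/andP: exact0 => sub_cap _.
    exact: submx_trans sub_cap (capmxSl _ _).
  split => //; first exact/eqP.
  - by apply/eqP; rewrite -eqmx_kercap_rank // mask_dif_sub.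
  - by move=> i; apply/eqP; rewrite -eqmx_kercap_rank ?mask_dif_sub ?mask_dif_sq.
split; first exact/eqP.
- by rewrite eqmx_kercap_rank ?mask_dif_sub ?rank0.
- by move=> i; rewrite eqmx_kercap_rank ?mask_dif_sub ?mask_dif_sq ?rankS.
Qed.

End Masks.

Section EulerCharacteristic.
Variables (disp : Order.disp_t) (T : finPOrderType disp) (k : fieldType).
Implicit Types (E F : pcomplex T k) (M : Pmodule T k).

Lemma count_le_sum_count_mem (s : seq T) z :
  (count (fun x => x <= z)%O s)%:Z = \sum_(y | (y <= z)%O) (count_mem y s)%:Z.
Proof.
elim: s => [|x s IH]; first by rewrite big1.
under [RHS]eq_bigr do rewrite /= PoszD.
rewrite /= PoszD IH big_split /=; congr (_ + _).
have [xz|xNz] := boolP (x <= z)%O.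
  by rewrite (bigD1 x) //= eqxx big1 ?addr0 // => y /andP[_]; rewrite eq_sym => /negbTE ->.
by rewrite big1 // => y yz; case: eqP => // xy; rewrite xy yz in xNz.
Qed.

Lemma chain_rank_cls E i z : (chain_rank E i z)%:Z = \sum_(y | (y <= z)%O) cls E i y.
Proof. by rewrite /chain_rank rank_seq_mask count_le_sum_count_mem. Qed.

Lemma chain_rank_bounded E i z : (clen E <= i)%N -> chain_rank E i z = 0%N.
Proof.
by move=> le_len; apply/eqP; rewrite -leqn0 (leq_trans (rank_leq_row _)) // smd_bounded.
Qed.

Lemma bdry_rank_bounded E i z : (clen E <= i.+1)%N -> bdry_rank E i z = 0%N.
Proof.
by move=> le_len; apply/eqP; rewrite -leqn0 (leq_trans (rank_leq_row _)) // smd_bounded.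
Qed.

Lemma sum_alpha_hat_resolution E M z :
  is_resolution E M -> \sum_(y | (y <= z)%O) alpha_hat E y = (pdim M z)%:Z.
Proof.
case=> v /(_ z) /exact_at_rankP [full0 _ rank0 rankS].
have := alt_sum_telescope (n := chain_rank E ^~ z) (clen E) rank0 rankS.
rewrite full0 bdry_rank_bounded // mulr0 addr0 big_ord_recr /=.
rewrite chain_rank_bounded // mulr0 addr0 => <-.
rewrite exchange_big /=; apply: eq_bigr => i _.
by rewrite chain_rank_cls mulr_sumr.
Qed.

Lemma alpha_hat_resolution_unique E F M :
  is_resolution E M -> is_resolution F M -> alpha_hat E = alpha_hat F.
Proof.
move=> resE resF; apply/funext => y; apply/eqP; rewrite -subr_eq0; apply/eqP.
apply: (down_sums_eq0 (f := fun y => alpha_hat E y - alpha_hat F y)) => z.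
by rewrite sumrB (sum_alpha_hat_resolution z resE) (sum_alpha_hat_resolution z resF) subrr.
Qed.

End EulerCharacteristic.

Section ConsIf.
Variables (disp : Order.disp_t) (T : finPOrderType disp) (k : fieldType) (x : T).

Definition cons_if (b : bool) (s : seq T) : seq T := if b then x :: s else s.

Definition cons_if_mx (c : 'M[k]_1) b1 b0 s1 s0 (A : 'M[k]_(size s1, size s0)) :
    'M[k]_(size (cons_if b1 s1), size (cons_if b0 s0)) :=
  match b1 as b1', b0 as b0'
    return 'M[k]_(size (cons_if b1' s1), size (cons_if b0' s0)) with
  | true, true => block_mx c 0 0 A
  | true, false => col_mx (0 : 'M_(1, _)) A
  | false, true => row_mx (0 : 'M_(_, 1)) A
  | false, false => A
  end.

Definition cons_if_col b s p (A : 'M[k]_(size s, p)) : 'M[k]_(size (cons_if b s), p) :=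
  match b as b' return 'M[k]_(size (cons_if b' s), p) with
  | true => col_mx (0 : 'M_(1, p)) A
  | false => A
  end.

Lemma cons_if_mx_mul c c' b2 b1 b0 s2 s1 s0
    (A : 'M[k]_(size s2, size s1)) (B : 'M[k]_(size s1, size s0)) :
  cons_if_mx c b2 b1 A *m cons_if_mx c' b1 b0 B =
  cons_if_mx (if b1 then c *m c' else 0) b2 b0 (A *m B).
Proof.
(* The size change exposes [size (x :: s)] as [1 + size s], as the block lemmas expect. *)
by case: b2; case: b1; case: b0 => /=; rewrite -?[(size _).+1]/(1 + size _)%N
  ?mulmx_block ?mul_block_col ?mul_row_block ?mul_col_row ?mul_row_col ?mul_mx_row ?mul_col_mx
  ?mulmx0 ?mul0mx ?addr0 ?add0r ?block_mx0 ?col_mx0 ?row_mx0.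
Qed.

Lemma cons_if_mx_mul_col c b1 b0 s1 s0 p
    (A : 'M[k]_(size s1, size s0)) (B : 'M[k]_(size s0, p)) :
  cons_if_mx c b1 b0 A *m cons_if_col b0 B = cons_if_col b1 (A *m B).
Proof.
by case: b1; case: b0 => /=; rewrite -?[(size _).+1]/(1 + size _)%N
  ?mul_block_col ?mul_col_mx ?mul_row_col ?mulmx0 ?mul0mx ?addr0 ?add0r.
Qed.

Lemma cons_if_col0 b s p : cons_if_col b (0 : 'M[k]_(size s, p)) = 0.
Proof. by case: b => //=; rewrite col_mx0. Qed.

Lemma rank_cons_if_mx c b1 b0 s1 s0 (A : 'M[k]_(size s1, size s0)) :
  \rank (cons_if_mx c b1 b0 A) = ((b1 && b0) * \rank c + \rank A)%N.
Proof.
by case: b1; case: b0 => /=; rewrite -?[(size _).+1]/(1 + size _)%N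
  ?rank_diag_block_mx ?rank_col_0mx ?rank_row_0mx ?mul1n.
Qed.

Lemma rank_cons_if_col b s p (A : 'M[k]_(size s, p)) :
  \rank (cons_if_col b A) = \rank A.
Proof. by case: b => //=; rewrite -[(size _).+1]/(1 + size _)%N rank_col_0mx. Qed.

Lemma seq_mask_cons_if b s z :
  seq_mask k (cons_if b s) z = cons_if_mx (pt_mask k x z) b b (seq_mask k s z).
Proof. by case: b => //; apply: seq_mask_cons. Qed.

Lemma cons_if_mx_supp b1 b0 s1 s0 (A : 'M[k]_(size s1, size s0)) :
    (forall j' j, A j' j != 0 -> (tnth (in_tuple s0) j <= tnth (in_tuple s1) j')%O) ->
  forall j' j, cons_if_mx 1 b1 b0 A j' j != 0 ->
    (tnth (in_tuple (cons_if b0 s0)) j <= tnth (in_tuple (cons_if b1 s1)) j')%O.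
Proof.
move=> suppA; case: b1; case: b0 => /=; rewrite -?[(size _).+1]/(1 + size _)%N.
all: move=> j' j; rewrite ?mxE.
- case: (splitP j') => a ja; rewrite ?mxE; case: (splitP j) => b jb; rewrite ?mxE.
  + by rewrite !tnth_in_tuple_cons0 ?ja ?jb ?ord1.
  + by rewrite eqxx.
  + by rewrite eqxx.
  + by move/suppA; rewrite (tnth_in_tuple_cons ja) (tnth_in_tuple_cons jb).
- case: (splitP j') => a ja; rewrite ?mxE; first by rewrite eqxx.
  by move/suppA; rewrite (tnth_in_tuple_cons ja).
- case: (splitP j) => b jb; rewrite ?mxE; first by rewrite eqxx.
  by move/suppA; rewrite (tnth_in_tuple_cons jb).
- exact: suppA.
Qed.

Lemma cons_if_mx0 c b1 b0 s1 s0 :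
  ~~ (b1 && b0) -> cons_if_mx c b1 b0 (0 : 'M[k]_(size s1, size s0)) = 0.
Proof. by case: b1; case: b0 => //= _; rewrite ?col_mx0 ?row_mx0. Qed.

Variable M : Pmodule T k.

Definition seq_aug s (v : forall j : 'I_(size s), 'rV[k]_(pdim M (tnth (in_tuple s) j)))
    z : 'M[k]_(size s, pdim M z) :=
  \matrix_(j, c) (if (tnth (in_tuple s) j <= z)%O
                  then (v j *m Defs.pmap M (tnth (in_tuple s) j) z) 0 c else 0).

(* [conform_mx] transports [v j'] along [tnth (x :: s) (lift 0 j') = tnth s j'],
   which holds only propositionally. *)
Definition cons_if_aug b s
    (v : forall j : 'I_(size s), 'rV[k]_(pdim M (tnth (in_tuple s) j))) :
  forall j : 'I_(size (cons_if b s)), 'rV[k]_(pdim M (tnth (in_tuple (cons_if b s)) j)) :=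
  match b as b'
    return forall j : 'I_(size (cons_if b' s)),
      'rV[k]_(pdim M (tnth (in_tuple (cons_if b' s)) j)) with
  | true => fun j => if unlift ord0 j is Some j' then conform_mx 0 (v j') else 0
  | false => v
  end.

Lemma seq_aug_cons_if b s v z :
  seq_aug (@cons_if_aug b s v) z = cons_if_col b (seq_aug v z).
Proof.
case: b => //=; apply/matrixP => j c; rewrite mxE.
case: (unliftP ord0 j) => [j'|] ->.
- have conform_aug t (e : tnth (in_tuple s) j' = t) :
      (if (t <= z)%O then (conform_mx (0 : 'rV_(pdim M t)) (v j') *m Defs.pmap M t z) 0 c
       else 0) =
      (if (tnth (in_tuple s) j' <= z)%O
       then (v j' *m Defs.pmap M (tnth (in_tuple s) j') z) 0 c else 0).
    by case: t / e; rewrite conform_mx_id.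
  rewrite conform_aug; last by rewrite !(tnth_nth x).
  have -> : lift ord0 j' = rshift 1 j' :> 'I_(1 + size s) by apply: val_inj.
  by rewrite (col_mxEd (0 : 'M_(1, pdim M z)) (seq_aug v z)) /seq_aug !mxE.
- have -> : ord0 = lshift (size s) (ord0 : 'I_1) :> 'I_(1 + size s) by apply: val_inj.
  by rewrite (col_mxEu (0 : 'M_(1, pdim M z)) (seq_aug v z)) mul0mx !mxE if_same.
Qed.

End ConsIf.

Section AddCone.
Variables (disp : Order.disp_t) (T : finPOrderType disp) (k : fieldType).
Variables (x : T) (a : nat) (E : pcomplex T k).

(* [add_cone x a E] is E (+) Cone(id_{k[P]_x})[a], the new summands k[P]_x
   being placed first in degrees a and a+1. *)
Definition in_cone i := (i == a) || (i == a.+1).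

Definition add_cone_smd i := cons_if x (in_cone i) (smd E i).

Definition add_cone_dif i : 'M[k]_(size (add_cone_smd i.+1), size (add_cone_smd i)) :=
  cons_if_mx x 1 (in_cone i.+1) (in_cone i) (dif E i).

Lemma add_cone_smd_bounded i : (maxn (clen E) a.+2 <= i)%N -> add_cone_smd i = [::].
Proof.
rewrite geq_max => /andP[le_len le_a].
by rewrite /add_cone_smd (_ : in_cone i = false) ?smd_bounded //; rewrite /in_cone; lia.
Qed.

Lemma add_cone_dif_supp i j' j : add_cone_dif i j' j != 0 ->
  (tnth (in_tuple (add_cone_smd i)) j <= tnth (in_tuple (add_cone_smd i.+1)) j')%O.
Proof. exact: cons_if_mx_supp (@dif_supp _ _ _ E i) j' j. Qed.

Lemma add_cone_dif_sq i : add_cone_dif i.+1 *m add_cone_dif i = 0.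
Proof. by rewrite cons_if_mx_mul dif_sq cons_if_mx0 // /in_cone; lia. Qed.

Definition add_cone : pcomplex T k :=
  {| clen := maxn (clen E) a.+2; smd := add_cone_smd; dif := add_cone_dif;
     smd_bounded := add_cone_smd_bounded; dif_supp := add_cone_dif_supp;
     dif_sq := add_cone_dif_sq |}.

Lemma cls_add_cone : cls add_cone = (fun i y => cls E i y + cone_cls x a i y).
Proof.
apply/funext => i; apply/funext => y; rewrite /cls /cone_cls /= /add_cone_smd /in_cone.
case: ((i == a) || (i == a.+1)); last by rewrite andbF addr0.
by rewrite andbT eq_sym /= PoszD addrC.
Qed.

Lemma add_cone_resolution (M : Pmodule T k) : is_resolution E M -> is_resolution add_cone M.
Proof.
case=> v exactE; exists (cons_if_aug (b := in_cone 0) v) => z.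
have /exact_at_rankP [full0 comp0 rank0 rankS] := exactE z.
have aug_cone : aug_at (E := add_cone) (cons_if_aug v) z =
    cons_if_col x (in_cone 0) (aug_at v z).
  exact: seq_aug_cons_if.
have mask_cone i : Defs.mask add_cone i z =
    cons_if_mx x (pt_mask k x z) (in_cone i) (in_cone i) (Defs.mask E i z).
  exact: seq_mask_cons_if.
have rank_corner b : \rank (if b then pt_mask k x z else 0) = b && (x <= z)%O.
  by case: b; rewrite ?mxrank0 ?rank_pt_mask.
apply/exact_at_rankP; split.
- by rewrite mask_cone aug_cone cons_if_mx_mul_col rank_cons_if_col.
- rewrite mask_cone /= /add_cone_dif aug_cone cons_if_mx_mul cons_if_mx_mul_col.
  by rewrite comp0 cons_if_col0.
- move: rank0; rewrite /bdry_rank /chain_rank !mask_cone /= /add_cone_dif aug_cone.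
  rewrite cons_if_mx_mul cons_if_mx_mul_col !rank_cons_if_mx rank_cons_if_col mulmx1.
  by rewrite rank_corner rank_pt_mask; case: (x <= z)%O; rewrite /in_cone /=; lia.
- move=> i; move: (rankS i); rewrite /bdry_rank /chain_rank !mask_cone /= /add_cone_dif.
  rewrite !cons_if_mx_mul !rank_cons_if_mx mulmx1 !rank_corner rank_pt_mask.
  by case: (x <= z)%O; rewrite /in_cone /=; lia.
Qed.

End AddCone.

Section IndexBijections.
Variables (disp : Order.disp_t) (T : finPOrderType disp).

Lemma count_mem_tnth (s : seq T) y :
  count_mem y s = (\sum_(j < size s) (tnth (in_tuple s) j == y))%N.
Proof.
elim: s => [|x s IH]; first by rewrite big_ord0.
by rewrite /= big_ord_recl IH; congr (_ + _)%N; apply: eq_bigr => j _; rewrite !(tnth_nth x).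
Qed.

Lemma perm_eq_tnth_bij (s1 s2 : seq T) :
  perm_eq s1 s2 <->
  exists f : 'I_(size s1) -> 'I_(size s2),
    bijective f /\ forall j, tnth (in_tuple s2) (f j) = tnth (in_tuple s1) j.
Proof.
split=> [s12|[f [f_bij f_tnth]]]; last first.
  apply/allP => y _; apply/eqP; rewrite !count_mem_tnth (reindex f) /=.
    by apply: eq_bigr => j _; rewrite f_tnth.
  exact: onW_bij.
have size12 := perm_size s12.
move/(@tuple_permP _ _ _ (in_tuple s2)): s12 => [p s1E].
exists (fun j => p (cast_ord size12 j)); split.
  apply: inj_card_bij; last by rewrite !card_ord size12.
  by move=> j1 j2 /perm_inj /cast_ord_inj.
move=> j; set y := tnth _ (p _).
rewrite (tnth_nth y (in_tuple s1)) /= (congr1 (fun s => nth y s j) s1E).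
by rewrite [j in nth _ _ j](_ : _ = cast_ord size12 j :> nat) // -tnth_nth tnth_mktuple.
Qed.

End IndexBijections.

Lemma cls_eq_perm disp (T : finPOrderType disp) (k : fieldType) (E F : pcomplex T k) :
  cls E = cls F <-> forall i, perm_eq (smd E i) (smd F i).
Proof.
split=> [EF i|EF]; last first.
  by apply/funext => i; apply/funext => y; rewrite /cls (seq.permP (EF i)).
apply/allP => y _; apply/eqP.
by have [] := congr1 (fun f => f i y) EF.
Qed.

Section ZeroOrAbove.
Variables (R : realType) (e : R).
Local Open Scope ereal_scope.

Definition zero_or_above (x : \bar R) := x = 0 \/ e%:E <= x.

Hypothesis e_gt0 : (0 < e)%R.

Lemma zero_or_above_ge0 x : zero_or_above x -> 0 <= x.
Proof. by case=> [->//|]; apply: le_trans; rewrite lee_fin ltW. Qed.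

Lemma ereal_inf_zero_or_above (S : set (\bar R)) :
  (forall x, S x -> zero_or_above x) -> (ereal_inf S = 0 <-> S 0) /\ zero_or_above (ereal_inf S).
Proof.
move=> S_gap; have [S0|NS0] := pselect (S 0).
  have inf0 : ereal_inf S = 0.
    apply/le_anti; rewrite ereal_inf_lbound //=.
    by apply/ereal_infP => x /S_gap /zero_or_above_ge0.
  by split; [split | left].
have inf_ge : e%:E <= ereal_inf S.
  by apply/ereal_infP => x Sx; case: (S_gap x Sx) => // x0; rewrite x0 in Sx.
split; last by right.
split=> // inf0; move: inf_ge; rewrite inf0 lee_fin.
by move=> /(lt_le_trans e_gt0); rewrite ltxx.
Qed.

End ZeroOrAbove.

Section ZeroCost.
Variables (disp : Order.disp_t) (T : finPOrderType disp) (k : fieldType).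
Variables (R : realType) (d : T -> T -> R).
Hypothesis d_metric : is_metric d.
Implicit Types E F : pcomplex T k.

Lemma dist_eq0 x y : d x y = 0 <-> x = y.
Proof. by case: d_metric. Qed.

Lemma dist_ge0 x y : 0 <= d x y.
Proof.
case: d_metric => d_eq0 d_sym d_tri; have := d_tri x y x.
by rewrite (d_sym y x) (proj2 (d_eq0 x x) erefl); lra.
Qed.

Definition min_dist : R := \big[Num.min/1]_(p : T * T | p.1 != p.2) d p.1 p.2.

Lemma min_dist_gt0 : 0 < min_dist.
Proof.
apply: (big_ind (fun r => 0 < r)) => // [r s r_gt0 s_gt0|[x y] /= xy].
  by rewrite lt_min r_gt0 s_gt0.
by rewrite lt_def dist_ge0 andbT; apply: contra xy => /eqP /dist_eq0 ->.
Qed.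

Lemma min_dist_le x y : x != y -> min_dist <= d x y.
Proof. exact: (@bigmin_le_cond _ _ _ 1 (x, y) (fun p => p.1 != p.2) (fun p => d p.1 p.2)). Qed.

Lemma cost_ge0 E F (B : prematching E F) : 0 <= cost d B.
Proof. exact: bigmax_ge_id. Qed.

Lemma cost_eq0P E F (B : prematching E F) :
  cost d B = 0 <-> forall i j, sm (B i j) = sm j.
Proof.
split=> [cost0 i j|B_sm]; last first.
  apply/le_anti; rewrite cost_ge0 andbT.
  apply/bigmax_leP; split=> // i _; apply/bigmax_leP; split=> // j _.
  by rewrite B_sm (proj2 (dist_eq0 _ _) erefl).
have /bigmax_leP [_ le0] : cost d B <= 0 by rewrite cost0.
have [lt_len|le_len] := ltnP i (clen E); last first.
  have size_gt0 : (0 < size (smd E i))%N := leq_ltn_trans (leq0n j) (ltn_ord j).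
  by rewrite smd_bounded in size_gt0.
move: (le0 (Ordinal lt_len) isT) => /bigmax_leP [_ /(_ j isT)] le0'.
by apply/esym/dist_eq0/le_anti; rewrite le0' dist_ge0.
Qed.

Lemma cost_zero_or_above E F (B : prematching E F) :
  zero_or_above min_dist (cost d B)%:E.
Proof.
suff : cost d B = 0 \/ min_dist <= cost d B.
  by case=> [->|ge]; [left | right; rewrite lee_fin].
have Pmax r s : r = 0 \/ min_dist <= r -> s = 0 \/ min_dist <= s ->
    Num.max r s = 0 \/ min_dist <= Num.max r s.
  by rewrite maxEle; case: ifP.
rewrite /cost; elim/big_ind: _ => [|r s|i _]; [by left | exact: Pmax |].
elim/big_ind: _ => [|r s|j _]; [by left | exact: Pmax |].
have [->|/min_dist_le] := eqVneq (sm j) (sm (B i j)); last by right.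
by left; apply/dist_eq0.
Qed.

Lemma zero_cost_prematchingP E F :
  (exists B : prematching E F, is_prematching B /\ cost d B = 0) <-> cls E = cls F.
Proof.
rewrite cls_eq_perm; split=> [[B [B_bij /cost_eq0P B_sm]] i|EF].
  by apply/perm_eq_tnth_bij; exists (B i); split=> // j; apply: B_sm.
have Bi i := cid (iffLR (perm_eq_tnth_bij _ _) (EF i)).
exists (fun i => sval (Bi i)); split=> [i|]; first exact: (proj1 (svalP (Bi i))).
by apply/cost_eq0P => i; exact: (proj2 (svalP (Bi i))).
Qed.

Local Open Scope ereal_scope.
Local Open Scope classical_set_scope.

Lemma distR'_zero_or_above E F :
  (distR' d E F = 0 <-> exists B : prematching E F, is_prematching B /\ cost d B = 0%R) /\
  zero_or_above min_dist (distR' d E F).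
Proof.
have [] := ereal_inf_zero_or_above min_dist_gt0
  (S := [set (cost d B)%:E | B in [set B : prematching E F | is_prematching B]]).
  by move=> _ [B _ <-]; apply: cost_zero_or_above.
move=> inf0 gap; split=> //; rewrite inf0.
by split=> [[B B_bij [cost0]]|[B [B_bij cost0]]]; exists B => //; rewrite cost0.
Qed.

Definition zero_cost_resolutions (M N : Pmodule T k) :=
  exists E F : pcomplex T k,
    [/\ is_resolution E M, is_resolution F N,
        forall i, size (smd E i) = size (smd F i) &
        exists B : prematching E F, is_prematching B /\ cost d B = 0%R].

Lemma distB'_zero_or_above (M N : Pmodule T k) :
  (distB' d M N = 0 <-> zero_cost_resolutions M N) /\
  zero_or_above min_dist (distB' d M N).
Proof.
have [] := ereal_inf_zero_or_above min_dist_gt0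
  (S := [set distR' d EF.1 EF.2 | EF in Res M N]).
  by move=> _ [EF _ <-]; have [] := distR'_zero_or_above EF.1 EF.2.
move=> inf0 gap; split=> //; rewrite inf0; split.
  move=> [[E F] [resE resF sizeEF] /= /(distR'_zero_or_above E F).1 zero_cost].
  by exists E, F.
move=> [E [F [resE resF sizeEF zero_cost]]]; exists (E, F) => //.
exact/(distR'_zero_or_above E F).1.
Qed.

Lemma distB'_le_distB (M N : Pmodule T k) : distB' d M N <= distB d M N.
Proof.
apply/ereal_infP => _ [EF EF_res <-]; apply: le_trans (ereal_inf_lbound _) _.
  by exists EF.
by apply/ereal_infP => _ [B [B_bij _] <-]; apply: ereal_inf_lbound; exists B.
Qed.

Lemma distB'_eq0_of_distB (M N : Pmodule T k) : distB d M N = 0 -> distB' d M N = 0.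
Proof.
move=> distB0; apply/le_anti; rewrite -[X in _ <= X]distB0 distB'_le_distB /=.
exact/(zero_or_above_ge0 min_dist_gt0)/(distB'_zero_or_above M N).2.
Qed.

End ZeroCost.

Section ConeSubgroup.
Variables (disp : Order.disp_t) (T : finPOrderType disp) (k : fieldType).
Implicit Types E F : pcomplex T k.

Lemma cls_bounded E i y : (clen E <= i)%N -> cls E i y = 0.
Proof. by move=> le_len; rewrite /cls smd_bounded. Qed.

Lemma alpha_hat_widen E N y : (clen E <= N)%N ->
  alpha_hat E y = \sum_(i < N) (-1) ^+ i * cls E i y.
Proof.
move=> le_len; rewrite /alpha_hat (big_ord_widen N (fun i => (-1) ^+ i * cls E i y) le_len).
rewrite big_mkcond /=; apply: eq_bigr => i _; case: ifPn => // /negbTE.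
by rewrite ltnNge => /negbFE le_i; rewrite cls_bounded // mulr0.
Qed.

Lemma alpha_hat_cls E F : cls E = cls F -> alpha_hat E = alpha_hat F.
Proof.
move=> EF; apply/funext => y.
by rewrite !(@alpha_hat_widen _ (maxn (clen E) (clen F))) ?leq_maxl ?leq_maxr ?EF.
Qed.

Definition cone_sum (l : seq (T * nat)) : nat -> T -> int :=
  fun i y => \sum_(q <- l) cone_cls q.1 q.2 i y.

Lemma cone_sum_nseq_cat n q l i y :
  cone_sum (nseq n q ++ l) i y = n%:Z * cone_cls q.1 q.2 i y + cone_sum l i y.
Proof.
rewrite /cone_sum big_cat /=; congr (_ + _).
elim: n => [|n IH]; first by rewrite big_nil mul0r.
by rewrite big_cons IH -addn1 PoszD mulrDl mul1r addrC.
Qed.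

Lemma in_cone_subgroup_split f : in_cone_subgroup f ->
  exists lp ln, forall i y, f i y = cone_sum lp i y - cone_sum ln i y.
Proof.
case=> l ->{f}; elim: l => [|[[n|n] q] l [lp [ln IH]]].
- by exists [::], [::] => i y; rewrite /cone_sum !big_nil subrr.
- exists (nseq n q ++ lp), ln => i y.
  by rewrite big_cons IH cone_sum_nseq_cat /=; ring.
- exists lp, (nseq n.+1 q ++ ln) => i y.
  by rewrite big_cons IH cone_sum_nseq_cat NegzE /=; ring.
Qed.

Lemma alt_sum0_in_cone_subgroup N (f : nat -> T -> int) :
  (forall i y, (N < i)%N -> f i y = 0) ->
  (forall y, \sum_(i < N.+1) (-1) ^+ i * f i y = 0) -> in_cone_subgroup f.
Proof.
elim: N f => [|N IH] f f_supp f_sum.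
  exists [::]; apply/funext => i; apply/funext => y; rewrite big_nil.
  case: i => [|i]; last exact: f_supp.
  by have := f_sum y; rewrite big_ord1 expr0 mul1r.
(* [g] cancels the top degree of [f] with cones Cone(id_{k[P]_y})[N]. *)
pose g i y := f i y - f N.+1 y * cone_cls y N i y.
have [l gE] : in_cone_subgroup g.
  apply: IH => [i y lt_i|y].
    rewrite /g /cone_cls eqxx /=; have [->|neq] := eqVneq i N.+1.
      by rewrite orbT mulr1 subrr.
    by rewrite f_supp ?mulr0 ?subr0 //; lia.
  have := f_sum y; rewrite big_ord_recr /= => sum0.
  rewrite /g; under eq_bigr => i _ do rewrite mulrBr; rewrite sumrB.
  rewrite [X in _ - X]big_ord_recr /= [X in _ - (X + _)]big1 => [|i _]; last first.
    rewrite /cone_cls eqxx /=.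
    have -> : ((i : nat) == N) || ((i : nat) == N.+1) = false by have := ltn_ord i; lia.
    by rewrite !mulr0.
  rewrite /cone_cls !eqxx /= mulr1 add0r.
  move: sum0; rewrite exprS mulN1r mulNr => /eqP; rewrite addr_eq0 opprK => /eqP ->.
  by rewrite subrr.
exists (l ++ [seq (f N.+1 y, (y, N)) | y <- enum T]).
apply/funext => i; apply/funext => y'; have := congr1 (fun h => h i y') gE; rewrite /g /= => e.
rewrite big_cat /= -e big_map big_enum /= (bigD1 y') //= big1 => [|y y_neq]; last first.
  by rewrite /cone_cls eq_sym (negbTE y_neq) /= mulr0.
by rewrite addr0 subrK.
Qed.

Definition add_cones (E : pcomplex T k) (l : seq (T * nat)) : pcomplex T k :=
  foldr (fun q F => add_cone q.1 q.2 F) E l.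

Lemma add_cones_resolution E (M : Pmodule T k) l :
  is_resolution E M -> is_resolution (add_cones E l) M.
Proof. by elim: l => //= q l IH resE; apply/add_cone_resolution/IH. Qed.

Lemma cls_add_cones E l i y : cls (add_cones E l) i y = cls E i y + cone_sum l i y.
Proof.
elim: l => [|q l IH]; first by rewrite /cone_sum big_nil addr0.
by rewrite /= cls_add_cone IH /cone_sum big_cons; ring.
Qed.

End ConeSubgroup.

Section Resolutions.
Variables (disp : Order.disp_t) (T : finPOrderType disp) (k : fieldType).
Variables (R : realType) (d : T -> T -> R).
Hypothesis d_metric : is_metric d.
Variables (M N : Pmodule T k) (PM PN : pcomplex T k).
Hypotheses (resPM : is_resolution PM M) (resPN : is_resolution PN N).

Lemma zero_cost_resolutions_alpha_hat :
  zero_cost_resolutions d M N -> alpha_hat PM = alpha_hat PN.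
Proof.
case=> [E [F [resE resF _ /(zero_cost_prematchingP d_metric) EF]]].
rewrite (alpha_hat_resolution_unique resPM resE) (alpha_hat_resolution_unique resPN resF).
exact: alpha_hat_cls.
Qed.

Lemma alpha_hat_in_cone_subgroup :
  alpha_hat PM = alpha_hat PN -> in_cone_subgroup (fun i x => cls PM i x - cls PN i x).
Proof.
move=> PMN; apply: (@alt_sum0_in_cone_subgroup _ _ (maxn (clen PM) (clen PN))).
  move=> i y lt_i; rewrite !cls_bounded ?subrr //; apply: leq_trans (ltnW lt_i).
    exact: leq_maxr.
  exact: leq_maxl.
move=> y; under eq_bigr => i _ do rewrite mulrBr.
rewrite sumrB -!alpha_hat_widen ?PMN ?subrr // leqW //; [exact: leq_maxr | exact: leq_maxl].
Qed.

Lemma in_cone_subgroup_zero_cost_resolutions :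
  in_cone_subgroup (fun i x => cls PM i x - cls PN i x) -> zero_cost_resolutions d M N.
Proof.
case/in_cone_subgroup_split => lp [ln PMN].
have EF : cls (add_cones PM ln) = cls (add_cones PN lp).
  apply/funext => i; apply/funext => y; rewrite !cls_add_cones.
  by have := PMN i y; lia.
exists (add_cones PM ln), (add_cones PN lp); split; try exact: add_cones_resolution.
  by move=> i; apply/perm_size/(cls_eq_perm _ _).1.
exact/(zero_cost_prematchingP d_metric).
Qed.

End Resolutions.

Unset Implicit Arguments.
Theorem lemma4p10 (R : realType) (disp : Order.disp_t) (T : finPOrderType disp)
    (k : fieldType) (d : T -> T -> R) (hd : is_metric d) :
  (* (1) *)
  (forall E F : pcomplex T k,
     (distR' d E F = 0%E <->
      exists B : prematching E F, is_prematching B /\ cost d B = 0%R) /\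
     ((exists B : prematching E F, is_prematching B /\ cost d B = 0%R) <->
      cls E = cls F)) /\
  (* (2) *)
  (forall (M N : Pmodule T k) (PM PN : pcomplex T k),
     is_min_resolution PM M -> is_min_resolution PN N ->
     (distB' d M N = 0%E <->
      exists (E F : pcomplex T k),
        [/\ is_resolution E M, is_resolution F N,
            forall i, size (smd E i) = size (smd F i) &
            exists B : prematching E F, is_prematching B /\ cost d B = 0%R]) /\
     ((exists (E F : pcomplex T k),
        [/\ is_resolution E M, is_resolution F N,
            forall i, size (smd E i) = size (smd F i) &
            exists B : prematching E F, is_prematching B /\ cost d B = 0%R]) <->
      in_cone_subgroup (fun i x => (cls PM i x - cls PN i x)%R)) /\
     (in_cone_subgroup (fun i x => (cls PM i x - cls PN i x)%R) <->
      alpha_hat PM = alpha_hat PN) /\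
     (* in particular *)
     (distB d M N = 0%E -> alpha_hat PM = alpha_hat PN)).
Proof.
split=> [E F|M N PM PN [resPM _] [resPN _]].
  by split; [exact: (distR'_zero_or_above hd E F).1 | exact: zero_cost_prematchingP].
have b_d := zero_cost_resolutions_alpha_hat hd resPM resPN.
have d_c := @alpha_hat_in_cone_subgroup _ _ _ PM PN.
have c_b := in_cone_subgroup_zero_cost_resolutions hd resPM resPN.
have a_b := (distB'_zero_or_above hd M N).1.
split; first exact: a_b.
split; first by split=> [/b_d/d_c|/c_b].
split; first by split=> [/c_b/b_d|/d_c].
by move=> /(distB'_eq0_of_distB hd) /a_b /b_d.
Qed.
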